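(* The maximum matching size problem (on incremental graph streams) admits an extendable bitwise AND gadget with $v(d)=O(d^2)$ and $t(d)=O(d^2)$.
   Context: Let $\zeta\in\mathbb N$ be a fixed constant and $m=\zeta d$. An extendable bitwise AND gadget for a graph function $g$ (here $g(G)$ = maximum number of pairwise vertex-disjoint edges of $G$, a real-valued function) consists of positive increasing functions $v,t:\mathbb N\to\mathbb N$ and, for each $d$: an initial graph $H_{\mathrm{init}}=(V,E_0)$ with $|V|=v(d)$; edges $e_1,\dots,e_d\in\binom V2$, defining $H^1_x=H_{\mathrm{init}}\cup\{e_i: x_i=1\}$ for $x\in\{0,1\}^d$; and for every sequence of queries $q^1,\dots,q^m\in\{0,1\}^d$, edge sets $S^1,T^1,\dots,S^m,T^m$ and functions $\mathrm{dec}_j:\mathrm{Range}(g)\to\mathbb R$ (depending on the queries but not on $x$) such that: (a) each $\mathrm{dec}_j$ is $1$-Lipschitz; (b) with $Q^j_x=H^j_x\cup S^j$, $\mathrm{dec}_j(g(Q^j_x))-\mathrm{dec}_j(g(H^j_x))=\langle x,q^j\rangle$ for all $x$; (c) $H^{j+1}_x=Q^j_x\cup T^j$; and the total number of edge insertions $|E_0|+d+\sum_j(|S^j|+|T^j|)$ is at most $t(d)$. For real-valued $g$ one may take $\mathrm{dec}_j=\mathrm{id}$. *)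

From Stdlib Require Import Reals.
From mathcomp Require Import all_boot.

Set Implicit Arguments. Unset Strict Implicit. Unset Printing Implicit Defensive.

(* A graph on vertex set 'I_n is given by its edge set: a set of 2-element
   subsets of 'I_n.  Edge insertion = set union. *)
Definition is_edges (n : nat) (E : {set {set 'I_n}}) : Prop :=
  forall e, e \in E -> #|e| = 2.

Definition is_matching (n : nat) (E M : {set {set 'I_n}}) : bool :=
  (M \subset E) &&
  [forall e1 in M, forall e2 in M, (e1 != e2) ==> [disjoint e1 & e2]].

Definition max_matching (n : nat) (E : {set {set 'I_n}}) : nat :=
  \max_(M : {set {set 'I_n}} | is_matching E M) #|M|.

Definition inner (d : nat) (x q : {ffun 'I_d -> bool}) : nat :=
  \sum_(i < d) (x i && q i).

Definition H1 (n d : nat) (E0 : {set {set 'I_n}}) (e : 'I_d -> {set 'I_n})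
  (x : {ffun 'I_d -> bool}) : {set {set 'I_n}} :=
  E0 :|: [set e i | i : 'I_d & x i].

(* 0-based indexing: Hg j = H^{j+1}_x, Qg j = Q^{j+1}_x;
   Q^j_x = H^j_x ∪ S^j and H^{j+1}_x = Q^j_x ∪ T^j. *)
Fixpoint Hg (n d : nat) (E0 : {set {set 'I_n}}) (e : 'I_d -> {set 'I_n})
  (S T : nat -> {set {set 'I_n}}) (x : {ffun 'I_d -> bool}) (j : nat)
  : {set {set 'I_n}} :=
  match j with
  | 0 => H1 E0 e x
  | j'.+1 => (Hg E0 e S T x j' :|: S j') :|: T j'
  end.

Definition Qg (n d : nat) (E0 : {set {set 'I_n}}) (e : 'I_d -> {set 'I_n})
  (S T : nat -> {set {set 'I_n}}) (x : {ffun 'I_d -> bool}) (j : nat)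
  : {set {set 'I_n}} :=
  Hg E0 e S T x j :|: S j.

(* dec : Range(g) -> R is 1-Lipschitz (g is nat-valued; a 1-Lipschitz map on
   the range extends to a 1-Lipschitz map on nat). *)
Definition lipschitz1 (dec : nat -> R) : Prop :=
  forall a b : nat, Rle (Rabs (Rminus (dec a) (dec b))) (Rabs (Rminus (INR a) (INR b))).

(* Extendable bitwise AND gadget for g = max_matching, with parameter zeta
   (m = zeta * d queries) and size functions v, t. *)
Definition ext_AND_gadget (zeta : nat) (v t : nat -> nat) : Prop :=
  (forall d, 0 < v d) /\ (forall d, 0 < t d) /\
  (forall a b, a <= b -> v a <= v b) /\ (forall a b, a <= b -> t a <= t b) /\
  forall d : nat,
    exists (E0 : {set {set 'I_(v d)}}) (e : 'I_d -> {set 'I_(v d)}),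
      is_edges E0 /\ (forall i, #|e i| = 2) /\
      forall q : nat -> {ffun 'I_d -> bool},
        exists (S T : nat -> {set {set 'I_(v d)}}) (dec : nat -> nat -> R),
          (forall j, j < zeta * d -> is_edges (S j) /\ is_edges (T j)) /\
          (forall j, j < zeta * d -> lipschitz1 (dec j)) /\
          (forall j, j < zeta * d -> forall x : {ffun 'I_d -> bool},
              Rminus (dec j (max_matching (Qg E0 e S T x j)))
                     (dec j (max_matching (Hg E0 e S T x j)))
              = INR (inner x (q j))) /\
          #|E0| + d + \sum_(j < zeta * d) (#|S j| + #|T j|) <= t d.

From Stdlib Require Import Reals.
From mathcomp Require Import all_boot zify.
Set Implicit Arguments. Unset Strict Implicit. Unset Printing Implicit Defensive.

(* Every coordinate i has two hubs, joined by the input edge e_i when x_i = 1,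
   and every hub always carries one fresh pendant vertex.  A maximum matching
   of H^j matches each hub to its fresh pendant and each older pendant to its
   leaf, so its size does not depend on x.  Query j hangs a leaf on the fresh
   pendants of the queried coordinates: their hubs become free and can be
   matched to each other exactly when e_i is present, so the matching grows by
   <x, q^j>.  T^j hangs leaves on the remaining fresh pendants and gives every
   hub a new one, restoring the invariant.  Each maximum is certified by a
   vertex cover whose vertices are matched injectively to partners outside it.
   With m = zeta d rounds this uses O(d m) vertices and insertions. *)

Lemma sum_ord_ltn n c : \sum_(t < n) (t < c) = minn n c.
Proof. by elim: n => [|n IH]; rewrite ?big_ord0 ?min0n // big_ord_recr /= IH; lia. Qed.

Section MatchingCertificate.
Variables (n : nat) (L : finType) (vert : L -> 'I_n) (E : {set {set 'I_n}}).

Lemma max_matching_le_cover (P : pred L) :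
  (forall e, e \in E -> exists2 l, P l & vert l \in e) -> max_matching E <= #|P|.
Proof.
move=> cover; apply/bigmax_leqP => M /andP[/subsetP sME /forallP disj].
have [->|[e0 e0M]] := set_0Vmem M; first by rewrite cards0.
have [l0 _ _] := cover _ (sME _ e0M).
pose rep (e : {set 'I_n}) := odflt l0 [pick l | P l & vert l \in e].
have repP e : e \in M -> P (rep e) && (vert (rep e) \in e).
  move=> eM; rewrite /rep; case: pickP => [l //|none].
  by have [l lP le] := cover _ (sME _ eM); have := none l; rewrite lP le.
have rep_inj : {in M &, injective rep}.
  move=> e1 e2 e1M e2M same; apply: contraTeq isT => ne.
  have := disj e1; rewrite e1M => /forallP/(_ e2); rewrite e2M ne /=.
  move/pred0P/(_ (vert (rep e1))); rewrite /= (andP (repP e1 e1M)).2 same.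
  by rewrite (andP (repP e2 e2M)).2.
rewrite -(card_in_imset rep_inj); apply: subset_leq_card.
by apply/subsetP => _ /imsetP[e eM ->]; rewrite unfold_in; case/andP: (repP e eM).
Qed.

Hypothesis vert_inj : injective vert.

Lemma leq_card_max_matching (P : pred L) (f : L -> L) :
  (forall l, P l -> [set vert l; vert (f l)] \in E) ->
  (forall l, P l -> ~~ P (f l)) ->
  {in P &, injective f} ->
  #|P| <= max_matching E.
Proof.
move=> edgeE out f_inj; set M := [set [set vert l; vert (f l)] | l in P].
have memM y l : (vert y \in [set vert l; vert (f l)]) = (y == l) || (y == f l).
  by rewrite !inE !(inj_eq vert_inj).
have not_partner l1 l2 : P l1 -> P l2 -> l1 != f l2.
  by move=> P1 P2; apply: contraTneq P1 => ->; apply: out.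
have -> : #|P| = #|M|.
  rewrite card_in_imset // => l1 l2 P1 P2 same.
  have : vert l1 \in [set vert l2; vert (f l2)] by rewrite -same set21.
  by rewrite memM (negbTE (not_partner _ _ P1 P2)) orbF => /eqP.
apply: leq_bigmax_cond; apply/andP; split.
  by apply/subsetP => _ /imsetP[l Pl ->]; apply: edgeE.
apply/forallP => e1; apply/implyP => /imsetP[l1 P1 ->].
apply/forallP => e2; apply/implyP => /imsetP[l2 P2 ->]; apply/implyP => ne.
have l12 : l1 != l2 by apply: contraNneq ne => ->.
have fl12 : f l1 != f l2 by apply: contraNneq l12 => /f_inj ->.
apply/pred0P => v /=; apply/negbTE/andP => -[/set2P[] -> ].
  by rewrite memM (negbTE l12) (negbTE (not_partner _ _ P1 P2)).
by rewrite memM (negbTE fl12) eq_sym (negbTE (not_partner _ _ P2 P1)).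
Qed.

Lemma max_matching_eq_card (P : pred L) (f : L -> L) :
  (forall e, e \in E -> exists2 l, P l & vert l \in e) ->
  (forall l, P l -> [set vert l; vert (f l)] \in E) ->
  (forall l, P l -> ~~ P (f l)) ->
  {in P &, injective f} ->
  max_matching E = #|P|.
Proof.
move=> cover edgeE out f_inj; apply/eqP; rewrite eqn_leq.
by rewrite max_matching_le_cover //=; apply: leq_card_max_matching edgeE out f_inj.
Qed.

End MatchingCertificate.

Definition gadget_size d m := (d * (4 * m + 6)).+1.

Lemma leq_gadget_size d1 d2 m1 m2 :
  d1 <= d2 -> m1 <= m2 -> gadget_size d1 m1 <= gadget_size d2 m2.
Proof. by move=> le_d le_m; rewrite ltnS leq_mul // leq_add2r leq_mul2l le_m orbT. Qed.

Lemma gadget_size_quadratic zeta d :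
  0 < d -> gadget_size d (zeta * d) <= (4 * zeta + 7) * d ^ 2.
Proof. rewrite /gadget_size; nia. Qed.

Section Gadget.
Variables d m : nat.

Local Notation branch := ('I_d * bool)%type.
Definition gadget_vertex : finType := (branch + branch * 'I_m.+1 * bool)%type.
Local Notation vtx := gadget_vertex.

Definition hub (b : branch) : vtx := inl b.
Definition pend (b : branch) (t : 'I_m.+1) : vtx := inr (b, t, false).
Definition far (b : branch) (t : 'I_m.+1) : vtx := inr (b, t, true).

(* The extra vertex [None] keeps the vertex count positive when [d = 0]. *)
Definition vert (v : vtx) : 'I_#|{: option vtx}| := enum_rank (Some v).

Lemma vert_inj : injective vert.
Proof. by move=> u w /enum_rank_inj []. Qed.

Lemma card_gadget_vertices : #|{: option vtx}| = gadget_size d m.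
Proof. by rewrite card_option card_sum !card_prod !card_ord card_bool /gadget_size; lia. Qed.

Definition edge (u w : vtx) := [set vert u; vert w].
Definition spoke b t := edge (hub b) (pend b t).
Definition tail b t := edge (pend b t) (far b t).
Definition input_edge i := edge (hub (i, false)) (hub (i, true)).
Definition init_edges := [set spoke b ord0 | b : branch].

Lemma card_branch : #|{: branch}| = d * 2.
Proof. by rewrite card_prod card_ord card_bool. Qed.

Lemma card_edge u w : u != w -> #|edge u w| = 2.
Proof. by rewrite /edge cards2 (inj_eq vert_inj) => ->. Qed.

Lemma card_spoke b t : #|spoke b t| = 2. Proof. exact: card_edge. Qed.
Lemma card_tail b t : #|tail b t| = 2. Proof. by apply: card_edge; apply/eqP => -[]. Qed.
Lemma card_input_edge i : #|input_edge i| = 2. Proof. by apply: card_edge; apply/eqP => -[]. Qed.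

Lemma is_edges_init : is_edges init_edges.
Proof. by move=> _ /imsetP[b _ ->]; apply: card_spoke. Qed.

Variable q : nat -> {ffun 'I_d -> bool}.

Definition queried_tails j := [set tail b (inord j) | b : branch & q j b.1].
Definition round_edges j :=
  [set tail b (inord j) | b : branch & ~~ q j b.1] :|: [set spoke b (inord j.+1) | b : branch].

Lemma is_edges_queried_tails j : is_edges (queried_tails j).
Proof. by move=> _ /imsetP[b _ ->]; apply: card_tail. Qed.

Lemma is_edges_round_edges j : is_edges (round_edges j).
Proof. by move=> e; rewrite inE => /orP[] /imsetP[b _ ->]; rewrite ?card_tail ?card_spoke. Qed.

Lemma card_round_insertions j : #|queried_tails j| + #|round_edges j| <= d * 4.
Proof.
have tails : #|queried_tails j| + #|[set tail b (inord j) | b : branch & ~~ q j b.1]| <= d * 2.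
  apply: leq_trans (leq_add (leq_imset_card _ _) (leq_imset_card _ _)) _.
  rewrite -card_branch -(cardsC [set b : branch | q j b.1]) leq_add2l.
  by apply: subset_leq_card; apply/subsetP => b; rewrite !inE.
rewrite /round_edges; apply: leq_trans (leq_add (leqnn _) (leq_card_setU _ _).1) _.
rewrite addnA; apply: leq_trans (leq_add tails (leq_imset_card _ _)) _.
by rewrite card_branch; lia.
Qed.

Lemma card_insertions :
  #|init_edges| + d + \sum_(j < m) (#|queried_tails j| + #|round_edges j|) <= gadget_size d m.
Proof.
apply: leq_trans (_ : _ <= #|{: branch}| + d + m * (d * 4)) _.
  have -> : m * (d * 4) = \sum_(j < m) d * 4 by rewrite sum_nat_const card_ord.
  by rewrite leq_add ?leq_add2r ?leq_imset_card ?leq_sum // => j _; apply: card_round_insertions.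
by rewrite card_branch /gadget_size; lia.
Qed.

Variable x : {ffun 'I_d -> bool}.

Local Notation H j := (Hg init_edges input_edge queried_tails round_edges x j).
Local Notation Q j := (Qg init_edges input_edge queried_tails round_edges x j).

Lemma Hg_edgeP j e : j <= m -> e \in H j ->
  [\/ exists2 i, x i & e = input_edge i,
      exists b (t : 'I_m.+1), t <= j /\ e = spoke b t
    | exists b (t : 'I_m.+1), t < j /\ e = tail b t].
Proof.
elim: j e => [|j IH] e le_jm /=.
  rewrite inE => /orP[/imsetP[b _ ->]|/imsetP[i]].
    by apply: Or32; exists b, ord0.
  by rewrite inE => xi ->; apply: Or31; exists i.
have val_inord_j : (inord j : 'I_m.+1) = j :> nat by rewrite inordK // ltnW.
rewrite !inE => /orP[/orP[/(IH e (ltnW le_jm))|]|/orP[]].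
- case=> [? | [b [t [le_tj ->]]] | [b [t [lt_tj ->]]]]; first exact: Or31.
    by apply: Or32; exists b, t; rewrite (leq_trans le_tj).
  by apply: Or33; exists b, t; rewrite ltnS ltnW.
- by case/imsetP=> b _ ->; apply: Or33; exists b, (inord j); rewrite val_inord_j.
- by case/imsetP=> b _ ->; apply: Or33; exists b, (inord j); rewrite val_inord_j.
- by case/imsetP=> b _ ->; apply: Or32; exists b, (inord j.+1); rewrite inordK.
Qed.

Lemma Hg_mono j k : j <= k -> H j \subset H k.
Proof.
move/subnK <-; elim: (k - j) => //= i IH.
by apply: subset_trans IH _; apply/subsetP => e eH; rewrite !inE eH.
Qed.

Lemma input_edge_Hg j i : x i -> input_edge i \in H j.
Proof.
move=> xi; apply: subsetP (Hg_mono (leq0n j)) _ _.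
by rewrite /= inE; apply/orP; right; apply: imset_f; rewrite inE.
Qed.

Lemma spoke_Hg j b : j <= m -> spoke b (inord j) \in H j.
Proof.
case: j => [|j] le_jm /=; rewrite !inE.
  have -> : inord 0 = ord0 :> 'I_m.+1 by apply: val_inj; rewrite /= inordK.
  by apply/orP; left; apply/imsetP; exists b.
by apply/orP; right; apply/orP; right; apply/imsetP; exists b.
Qed.

Lemma tail_Hg j b (t : 'I_m.+1) : t < j -> tail b t \in H j.
Proof.
move=> lt_tj; apply: subsetP (Hg_mono lt_tj) _ _; rewrite /= !inE.
case: (boolP (q t b.1)) => qt; apply/orP; [left; apply/orP; right | right; apply/orP; left].
all: by apply/imsetP; exists b; rewrite ?inord_val ?inE.
Qed.

Definition partner (h : branch -> vtx) (v : vtx) : vtx :=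
  match v with inl b => h b | inr (b, t, _) => far b t end.

Definition Hg_cover j (v : vtx) : bool :=
  if v is inr (_, t, k) then ~~ k && (t < j) else true.

(* For a queried coordinate the pendant of round [j] replaces both hubs in the
   cover, except that the hub on side [false] must stay to cover [e_i]. *)
Definition Qg_cover j (v : vtx) : bool :=
  match v with
  | inl (i, s) => ~~ q j i || x i && ~~ s
  | inr (b, t, k) => ~~ k && (t < j + q j b.1)
  end.

Lemma card_gadget_pred (P : pred vtx) :
  #|P| = \sum_(i < d) \sum_(s : bool)
           (P (hub (i, s)) + \sum_(t < m.+1) (P (pend (i, s) t) + P (far (i, s) t))).
Proof.
have sum_pair (I J : finType) (F : I * J -> nat) :
    \sum_(p : I * J) F p = \sum_(i : I) \sum_(k : J) F (i, k).
  by rewrite pair_bigA; apply: eq_bigr => -[].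
rewrite -sum1_card big_mkcond big_sumType /= !sum_pair -big_split /=.
apply: eq_bigr => i _; rewrite big_split /=; congr (_ + _); apply: eq_bigr => s _.
by apply: eq_bigr => t _; rewrite big_bool addnC.
Qed.

Lemma card_Hg_cover j : j <= m -> #|Hg_cover j| = d * 2 * j.+1.
Proof.
have -> : d * 2 * j.+1 = \sum_(i < d) 2 * j.+1 by rewrite sum_nat_const card_ord mulnA.
move=> le_jm; rewrite card_gadget_pred.
apply: eq_bigr => i _; rewrite big_bool /=.
under eq_bigr do rewrite addn0.
rewrite sum_ord_ltn; lia.
Qed.

Lemma card_Qg_cover j : j <= m -> #|Qg_cover j| = d * 2 * j.+1 + inner x (q j).
Proof.
have -> : d * 2 * j.+1 = \sum_(i < d) 2 * j.+1 by rewrite sum_nat_const card_ord mulnA.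
move=> le_jm; rewrite card_gadget_pred /inner -big_split.
apply: eq_bigr => i _; rewrite big_bool /=.
under eq_bigr do rewrite addn0.
rewrite sum_ord_ltn; case: (q j i); case: (x i) => /=; lia.
Qed.

Lemma max_matching_Hg j : j <= m -> max_matching (H j) = d * 2 * j.+1.
Proof.
move=> le_jm; rewrite -card_Hg_cover //.
apply: (max_matching_eq_card vert_inj (f := partner (fun b => pend b (inord j)))).
- move=> e /(Hg_edgeP le_jm) [[i xi ->]|[b [t [_ ->]]]|[b [t [lt_tj ->]]]].
  + by exists (hub (i, false)); rewrite ?set21.
  + by exists (hub b); rewrite ?set21.
  + by exists (pend b t); rewrite /= ?lt_tj ?set21.
- by case=> [b _|[[b t] [] // lt_tj]]; [apply: spoke_Hg | apply: tail_Hg].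
- by case=> [b|[[b t] [|]]] //= _; rewrite inordK ?ltnn.
- case=> [b1|[[b1 t1] [|]]] [b2|[[b2 t2] [|]]]; rewrite !unfold_in //=.
  + by move=> _ _ [->].
  + by move=> _ _ [-> ->].
Qed.

Lemma max_matching_Qg j : j <= m -> max_matching (Q j) = d * 2 * j.+1 + inner x (q j).
Proof.
move=> le_jm; rewrite -card_Qg_cover //.
pose h b := if q j b.1 then hub (b.1, true) else pend b (inord j).
have Hj_Qj e : e \in H j -> e \in Q j by rewrite /Qg inE => ->.
apply: (max_matching_eq_card vert_inj (f := partner h)).
- move=> e; rewrite /Qg inE => /orP[/(Hg_edgeP le_jm)|/imsetP[b qb ->]].
    case=> [[i xi ->]|[[i s] [t [le_tj ->]]]|[b [t [lt_tj ->]]]].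
    + by exists (hub (i, false)); rewrite /= ?xi ?orbT ?set21.
    + case qi: (q j i).
        by exists (pend (i, s) t); rewrite /= ?qi ?addn1 ?ltnS ?le_tj ?set22.
      by exists (hub (i, s)); rewrite /= ?qi ?set21.
    + by exists (pend b t); rewrite /= ?ltn_addr ?set21.
  move: qb; rewrite inE => qb.
  by exists (pend b (inord j)); rewrite /= ?qb ?inordK ?addn1 ?set21.
- case=> [[i s]|[[b t] [|]]] //=; rewrite /h /=.
    case qi: (q j i) => /=; last by move=> _; exact: Hj_Qj (spoke_Hg _ le_jm).
    case/andP=> xi.
    by case: s => // _; exact: Hj_Qj (input_edge_Hg _ xi).
  move=> lt_t; have [lt_tj|ge_tj] := ltnP t j; first exact: Hj_Qj (tail_Hg _ lt_tj).
  case qb: (q j b.1) lt_t => [|]; rewrite ?addn0 ?addn1 ?ltnS => le_tj; last by lia.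
  have -> : t = inord j by apply: val_inj; rewrite /= inordK //; lia.
  by rewrite /Qg inE; apply/orP; right; apply/imsetP; exists b; rewrite ?inE.
- case=> [[i s]|[[b t] [|]]] //=; rewrite /h /=.
  by case qi: (q j i) => /= _; rewrite ?qi ?andbF // inordK ?addn0 ?ltnn.
case=> [[i1 s1]|[[b1 t1] [|]]] [[i2 s2]|[[b2 t2] [|]]]; rewrite !unfold_in //= /h /=.
- case: (q j i1) (q j i2) => [] [] //=.
  by case: s1 s2 => [] []; rewrite ?andbF // => _ _ [->].
  by move=> _ _ [-> ->].
- by case: (q j i1).
- by case: (q j i2).
- by move=> _ _ [-> ->].
Qed.

End Gadget.

Theorem mainTheorem3 : forall zeta : nat,
  exists v t : nat -> nat,
    ext_AND_gadget zeta v t /\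
    exists C N : nat, forall d, N <= d -> v d <= C * d ^ 2 /\ t d <= C * d ^ 2.
Proof.
move=> zeta.
exists (fun d => #|{: option (gadget_vertex d (zeta * d))}|), (fun d => gadget_size d (zeta * d)).
split; last first.
  exists (4 * zeta + 7), 1 => d d_gt0.
  by rewrite card_gadget_vertices gadget_size_quadratic.
have size_mono a b : a <= b -> gadget_size a (zeta * a) <= gadget_size b (zeta * b).
  by move=> le_ab; rewrite leq_gadget_size // leq_mul2l le_ab orbT.
split; first by move=> d; rewrite card_option.
split; first by [].
split; first by move=> a b /size_mono; rewrite !card_gadget_vertices.
split; first exact: size_mono.
move=> d; exists (init_edges d (zeta * d)), (input_edge (zeta * d)).
split; [exact: is_edges_init | split; [exact: card_input_edge | move=> q]].
exists (queried_tails (zeta * d) q), (round_edges (zeta * d) q), (fun _ k => INR k).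
split; [by split; [exact: is_edges_queried_tails | exact: is_edges_round_edges] | split].
  by move=> j _ a b; apply: Rle_refl.
split; last exact: card_insertions.
move=> j /ltnW le_jm x.
by rewrite max_matching_Qg // max_matching_Hg // plus_INR; ring.
Qed.
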